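(* Let $A$ be an infinite countable set, let $\{a_n\}_{n\in A}$ be a family of non-negative numbers such that for some $c>0$ the set $\{n\in A:a_n\leq c\}$ is infinite, and let $\{b_n\}_{n\in\mathbb{Z}_+}$ be a sequence of numbers in $[c,\infty)$ with $b_n\to\infty$ as $n\to\infty$. Then there exists a bijection $\pi:\mathbb{Z}_+\to A$ such that $a_{\pi(n)}\leq b_n$ for each $n\in\mathbb{Z}_+$.
   Context: $\mathbb{Z}_+$ is the set of non-negative integers. *)

From HB Require Import structures.
From mathcomp Require Import all_boot all_order all_algebra.
From mathcomp Require Import all_classical all_reals all_analysis.

From HB Require Import structures.
From mathcomp Require Import all_boot all_order all_algebra.
From mathcomp Require Import all_classical all_reals all_analysis.
Import Order.TTheory GRing.Theory Num.Theory.
Local Open Scope classical_set_scope.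
Local Open Scope ring_scope.

(* Enumerating A reduces everything to A = nat.  We then build pi greedily:
   at time n let k be the least index not used yet; take k if a k <= b n,
   and otherwise some unused index m with a m <= c <= b n, which exists since
   infinitely many indices are that small.  Every index is used at most once,
   and since b n -> +oo the least unused index k is eventually taken, as soon
   as b n >= a k. *)

Lemma nat_bijective_countable_infinite {A : Type} :
  countable [set: A] -> infinite_set [set: A] -> exists e : nat -> A, bijective e.
Proof.
move=> A_cnt A_inf; have [f] := elimT card_set_bijP (eq_card_nat A_cnt A_inf).
by rewrite setTT_bijective => -[g fK gK]; exists g; exists f.
Qed.

Lemma infinite_set_notin (s : seq nat) {P : set nat} :
  infinite_set P -> exists m, P m /\ m \notin s.
Proof.
move=> /infinite_setD/(_ (finite_seq s))/infinite_setN0[m [Pm /negP ms]].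
by exists m.
Qed.

Lemma exists_notin (s : seq nat) : exists m, m \notin s.
Proof. by have [m [_ ms]] := infinite_set_notin s infinite_nat; exists m. Qed.

Definition least_unused (s : seq nat) : nat := ex_minn (exists_notin s).

Lemma least_unused_notin s : least_unused s \notin s.
Proof. by rewrite /least_unused; case: ex_minnP. Qed.

Lemma least_unusedE {s k} :
  k \notin s -> (forall j, (j < k)%N -> j \in s) -> least_unused s = k.
Proof.
rewrite /least_unused; case: ex_minnP => m ms m_min ks s_lt_k.
apply/eqP; rewrite eqn_leq m_min //= leqNgt; apply/negP => /s_lt_k.
exact/negP.
Qed.

Lemma bijective_inj_surj (f : nat -> nat) :
  injective f -> (forall k, exists n, f n = k) -> bijective f.
Proof.
move=> fI fS; rewrite -setTT_bijective; split => //.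
- by move=> x y _ _; apply: fI.
- by move=> k _; have [n <-] := fS k; exists n.
Qed.

Section Greedy.
Context {R : realType} (a b : nat -> R) (c : R).
Hypotheses (small_inf : infinite_set [set n | a n <= c])
  (c_le_b : forall n, c <= b n) (b_oo : b @ \oo --> +oo).

Definition small_unused (s : seq nat) : nat :=
  xget 0%N [set m | a m <= c /\ m \notin s].

Lemma small_unusedP s : a (small_unused s) <= c /\ small_unused s \notin s.
Proof.
by rewrite /small_unused; case: xgetP => // /forallNP[]; apply: infinite_set_notin.
Qed.

Definition greedy_step (s : seq nat) (n : nat) : nat :=
  if a (least_unused s) <= b n then least_unused s else small_unused s.

Fixpoint greedy_hist (n : nat) : seq nat :=
  if n is n'.+1 then rcons (greedy_hist n') (greedy_step (greedy_hist n') n')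
  else [::].

Definition greedy (n : nat) : nat := greedy_step (greedy_hist n) n.

Lemma greedy_histE n : greedy_hist n = map greedy (iota 0 n).
Proof.
elim: n => [//|n IH].
by rewrite -[in RHS]addn1 iotaD map_cat -IH cats1.
Qed.

Lemma mem_greedy_hist n i : (i < n)%N -> greedy i \in greedy_hist n.
Proof. by move=> lt_in; rewrite greedy_histE map_f // mem_iota. Qed.

Lemma greedy_hist_mono m n : (m <= n)%N -> {subset greedy_hist m <= greedy_hist n}.
Proof.
move=> le_mn k; rewrite greedy_histE => /mapP[i]; rewrite mem_iota => /andP[_ lt_im] ->.
exact/mem_greedy_hist/(leq_trans lt_im).
Qed.

Lemma greedy_notin n : greedy n \notin greedy_hist n.
Proof.
rewrite /greedy /greedy_step; case: ifP => _; first exact: least_unused_notin.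
by case: (small_unusedP (greedy_hist n)).
Qed.

Lemma greedy_le n : a (greedy n) <= b n.
Proof.
rewrite /greedy /greedy_step; case: ifP => // _.
by apply: le_trans (c_le_b n); case: (small_unusedP (greedy_hist n)).
Qed.

Lemma greedy_inj : injective greedy.
Proof.
suff greedy_lt i j : (i < j)%N -> greedy i != greedy j.
  move=> i j eq_ij; case: (ltngtP i j) => // [/greedy_lt|/greedy_lt];
  by rewrite eq_ij eqxx.
by move=> lt_ij; apply: contraNneq (greedy_notin j) => <-; apply: mem_greedy_hist.
Qed.

Lemma greedy_hist_covers k : exists n, forall j, (j < k)%N -> j \in greedy_hist n.
Proof.
elim: k => [|k [T covT]]; first by exists 0%N.
have /cvgryPge/(_ (a k))[N _ b_ge] := b_oo.
pose n := maxn N T.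
have k_in : k \in greedy_hist n.+1.
  have [//|k_notin] := boolP (k \in greedy_hist n); first exact: greedy_hist_mono.
  have covn j : (j < k)%N -> j \in greedy_hist n.
    by move=> /covT; apply: greedy_hist_mono; rewrite leq_maxr.
  suff <- : greedy n = k by apply: mem_greedy_hist.
  have ak_le_bn : a k <= b n by apply: b_ge; rewrite /= leq_maxl.
  by rewrite /greedy /greedy_step (least_unusedE k_notin covn) ak_le_bn.
exists n.+1 => j; rewrite ltnS leq_eqVlt => /predU1P[->//|/covT].
by apply: greedy_hist_mono; rewrite (leq_trans (leq_maxr N T)).
Qed.

Lemma greedy_surj k : exists n, greedy n = k.
Proof.
have [T /(_ k (ltnSn k))] := greedy_hist_covers k.+1.
by rewrite greedy_histE => /mapP[n _ ->]; exists n.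
Qed.

Lemma greedy_bijective : bijective greedy.
Proof. exact: bijective_inj_surj greedy_inj greedy_surj. Qed.

End Greedy.

Theorem lemma2p2 (R : realType) (A : Type) (a : A -> R) (b : nat -> R) (c : R)
  (hAc : countable [set: A]) (hAi : infinite_set [set: A])
  (ha0 : forall n, 0 <= a n)
  (hc : 0 < c) (hinf : infinite_set [set n | a n <= c])
  (hb : forall n, c <= b n)
  (hbinf : b @ \oo --> +oo) :
  exists pi : nat -> A, bijective pi /\ forall n, a (pi n) <= b n.
Proof.
have [e [e' eK e'K]] := nat_bijective_countable_infinite hAc hAi.
have small_inf : infinite_set [set n | (a \o e) n <= c].
  move=> /(finite_image e); apply: contra_not hinf; apply: sub_finite_set => x /= ax.
  by exists (e' x); rewrite /= e'K.
exists (e \o greedy (a \o e) b c); split; last exact: greedy_le small_inf hb.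
apply: bij_comp; first by exists e'.
exact: greedy_bijective small_inf hbinf.
Qed.
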